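(* For every integer $q\ge2$, $\gamma^{DLD}(K_q^3)=q^2$.
   Context: $K_q^3=K_q\square K_q\square K_q$ is the graph with vertex set $\{1,\dots,q\}^3$ in which two vertices are adjacent iff they differ in exactly one coordinate. For a code (nonempty vertex subset) $C$ and vertex $v$, $I(C;v)=N[v]\cap C$, where $N[v]$ is the closed neighbourhood. A code $C$ is solid-locating-dominating if for all distinct non-codewords $u,v$, $I(C;u)\setminus I(C;v)\ne\emptyset$. $\gamma^{DLD}(G)$ is the minimum size of a solid-locating-dominating code in the finite graph $G$. *)

From mathcomp Require Import all_boot.
Set Implicit Arguments. Unset Strict Implicit. Unset Printing Implicit Defensive.

Definition vert (q : nat) : finType := ('I_q * 'I_q * 'I_q)%type.

Definition adj (q : nat) (u v : vert q) : bool :=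
  let: (a1, a2, a3) := u in let: (b1, b2, b3) := v in
  ((a1 != b1) + (a2 != b2) + (a3 != b3) == 1)%N.

Definition Nclosed (q : nat) (v : vert q) : {set vert q} :=
  [set u | (u == v) || adj u v].

Definition Iset (q : nat) (C : {set vert q}) (v : vert q) : {set vert q} :=
  Nclosed v :&: C.

Definition solid_LD (q : nat) (C : {set vert q}) : Prop :=
  C != set0 /\
  forall u v : vert q, u \notin C -> v \notin C -> u != v ->
    Iset C u :\: Iset C v != set0.

Definition gamma_DLD_is (q k : nat) : Prop :=
  (exists C : {set vert q}, solid_LD C /\ #|C| = k) /\
  (forall C : {set vert q}, solid_LD C -> k <= #|C|).

From mathcomp Require Import all_boot zify.

Set Implicit Arguments.
Unset Strict Implicit.
Unset Printing Implicit Defensive.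

(* The code {(a, b, c) | a + b + c = 0 mod q} meets every line of K_q^3 exactly
   once, and a code meeting every line is solid-locating-dominating: for a
   non-codeword u, the three codewords on the lines through u are never all in
   N[v] when v <> u.

   If the lines through a
   non-codeword u in two directions contain no codeword, every other point v of
   the third line is a codeword, for otherwise v sees every codeword that u sees.
   For q >= 3 each non-codeword thus sees at least two codewords. Take an
   axis-parallel plane with fewest codewords, say the layer z = c0 with m < q of
   them. An empty column a of that layer forces the plane x = a to carry at least
   2q + (q - 3)R - m codewords, R being the number of empty rows of the layer, and
   summing over the planes x = a gives |C| >= q^2 unless m = q - 1. In that case a
   single plane x = a0 and a single plane y = b0 are heavier than q - 1; the empty
   vertical lines of the other planes x = a all lie in y = b0, which is then too
   light. For q = 2, a layer with at most one codeword forces three codewords into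
   the other layer. *)

Lemma leq_sum_term (I : finType) (F : I -> nat) i : F i <= \sum_j F j.
Proof. by rewrite (bigD1 i) //= leq_addr. Qed.

Lemma sum_lt_card_eq0 (I : finType) (F : I -> nat) :
  \sum_i F i < #|I| -> exists i, F i = 0.
Proof.
move=> small; have /existsP [i /eqP Fi0] : [exists i, F i == 0]; last by exists i.
apply: contraTT small => /existsPn F_gt0.
rewrite -leqNgt -sum1_card; apply: leq_sum => i _.
by rewrite lt0n F_gt0.
Qed.

Lemma card_le_sum_add_eq0 (I : finType) (F : I -> nat) :
  #|I| <= \sum_i F i + \sum_i (F i == 0 : nat).
Proof.
rewrite -big_split -sum1_card; apply: leq_sum => i _.
by case: (F i).
Qed.

Lemma leq_sum_split (I : finType) (P : pred I) (F : I -> nat) m x :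
    (forall i, m <= F i) -> (forall i, P i -> x <= F i + m) ->
  #|I| * m + (\sum_i P i) * x <= \sum_i F i + (\sum_i P i) * (2 * m).
Proof.
move=> Fm PF; rewrite -sum1_card !big_distrl -!big_split /=.
apply: leq_sum => i _; case: (boolP (P i)) => [/PF|_] /=; last first.
  by rewrite !mul0n !addn0 mul1n Fm.
by rewrite !mul1n; lia.
Qed.

Lemma leq_others_of_sum (I : finType) (F : I -> nat) m i0 i :
    (forall j, m <= F j) -> 2 * m <= F i0 -> \sum_j F j <= (#|I| + 1) * m ->
  i != i0 -> F i <= m.
Proof.
move=> Fm Fi0 sumF ii0.
have : \sum_(j : I) m + F i <= \sum_j F j.
  rewrite (bigD1 i0) //= (bigD1 i0 (F := F)) //= (bigD1 i) ?ii0 //=.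
  rewrite (bigD1 i (F := F)) ?ii0 //=.
  have : \sum_(j | (j != i0) && (j != i)) m <= \sum_(j | (j != i0) && (j != i)) F j.
    exact: leq_sum.
  lia.
rewrite sum_nat_const (_ : #|xpredT| = #|I|) //; rewrite mulnDl mul1n in sumF; lia.
Qed.

Lemma min_layer_arith q m K R S : 2 < q -> q * m <= S -> S < q ^ 2 ->
    q <= m + K -> q <= m + R -> q * m + K * (2 * q + (q - 3) * R) <= S + K * (2 * m) ->
  m = q.-1.
Proof.
move=> q3 qmS Sq qK qR T.
have mq : m < q by rewrite -(ltn_pmul2l (ltnW (ltnW q3))); move: Sq; rewrite expnS expn1; lia.
case: (leqP q.-1 m) => [|mq1]; first lia.
pose d := q - m.
have K_ge : d * (2 * d + (q - 3) * d) <= K * (2 * d + (q - 3) * R).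
  by apply: leq_mul; [lia | apply: leq_add => //; apply: leq_mul; lia].
have : d * ((q - 1) * d) < d * q.
  have -> : (q - 1) * d = 2 * d + (q - 3) * d by rewrite -mulnDl; congr (_ * _); lia.
  have e1 : K * (2 * q + (q - 3) * R) = K * (2 * m) + K * (2 * d + (q - 3) * R).
    by rewrite -mulnDr; congr (_ * _); rewrite /d; lia.
  have e2 : q ^ 2 = q * m + d * q by rewrite (mulnC d) -mulnDr expnS expn1 /d; congr (_ * _); lia.
  lia.
rewrite ltn_pmul2l /d; last lia.
have : (q - 1) * 2 <= (q - 1) * (q - m) by apply: leq_mul; lia.
lia.
Qed.

Lemma exists_argmin (I : finType) (i0 : I) (F : I -> nat) :
  exists i, forall j, F i <= F j.
Proof. by case: (@arg_minnP _ i0 predT F isT) => i _ Fi; exists i => j; apply: Fi. Qed.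

Lemma ord_exists_neq n (i : 'I_n) : 1 < n -> exists j : 'I_n, j != i.
Proof.
rewrite -[n in 1 < n]card_ord => /card_gt1P [x [y [_ _ xy]]].
by case: (eqVneq x i) => [<-|]; [exists y; rewrite eq_sym | exists x].
Qed.

Lemma sum_gt0_exists (I : finType) (P : pred I) : 0 < \sum_i P i -> exists i, P i.
Proof.
move=> pos; apply/existsP; apply: contraTT pos => /existsPn notP.
by rewrite -leqNgt leqn0 big1 // => i _; rewrite (negbTE (notP i)).
Qed.

Section Cube.

Variable q : nat.
Implicit Types (C : {set vert q}) (u v z : vert q) (a b c x y w : 'I_q).

Lemma in_Nclosed x y w a b c :
  ((x, y, w) \in Nclosed (a, b, c)) =
  [|| (y == b) && (w == c), (x == a) && (w == c) | (x == a) && (y == b)].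
Proof.
rewrite inE /adj !xpair_eqE.
by case: (x =P a); case: (y =P b); case: (w =P c).
Qed.

Lemma Nclosed_three_lines a b c x1 x2 x3 v : v != (a, b, c) -> x1 != a -> x2 != b ->
  (x1, b, c) \in Nclosed v -> (a, x2, c) \in Nclosed v -> (a, b, x3) \in Nclosed v -> False.
Proof.
case: v => [[p r] s] vu x1a x2b; rewrite !in_Nclosed.
case: (eqVneq a p) => [<-|ap] in vu *.
  rewrite (negbTE x1a) /= !orbF => /andP [/eqP br /eqP cs] _ _.
  by rewrite br cs eqxx in vu.
rewrite /= !orbF => _ /andP [/eqP x2r _] /andP [/eqP br _].
by rewrite x2r -br eqxx in x2b.
Qed.

Lemma solid_LD_cover C u v : solid_LD C -> u \notin C -> v != u ->
  (forall z, z \in C -> z \in Nclosed u -> z \in Nclosed v) -> v \in C.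
Proof.
case=> _ sep uC vu cover; apply: contraT => vC.
have /set0Pn [z] : Iset C u :\: Iset C v != set0 by rewrite sep // eq_sym.
rewrite /Iset in_setD !in_setI => /andP [/negP zNv /andP [zu zC]].
by case: zNv; rewrite cover.
Qed.

Definition line1 C b c := \sum_a ((a, b, c) \in C : nat).
Definition line2 C a c := \sum_b ((a, b, c) \in C : nat).
Definition line3 C a b := \sum_c ((a, b, c) \in C : nat).
Definition plane1 C a := \sum_b line3 C a b.
Definition plane2 C b := \sum_c line1 C b c.
Definition plane3 C c := \sum_a line2 C a c.

Lemma line1_eq0_notin C a b c : line1 C b c = 0 -> (a, b, c) \notin C.
Proof. by apply: contra_eqN => abc; rewrite -lt0n (leq_trans _ (leq_sum_term _ a)) ?abc. Qed.

Lemma line2_eq0_notin C a b c : line2 C a c = 0 -> (a, b, c) \notin C.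
Proof. by apply: contra_eqN => abc; rewrite -lt0n (leq_trans _ (leq_sum_term _ b)) ?abc. Qed.

Lemma line3_eq0_notin C a b c : line3 C a b = 0 -> (a, b, c) \notin C.
Proof. by apply: contra_eqN => abc; rewrite -lt0n (leq_trans _ (leq_sum_term _ c)) ?abc. Qed.

Lemma line3_le C a b : line3 C a b <= q.
Proof.
by rewrite -[q]card_ord -sum1_card; apply: leq_sum => c _; case: (_ \in C).
Qed.

Lemma plane1E C a : plane1 C a = \sum_c line2 C a c.
Proof. exact: exchange_big. Qed.

Lemma plane2E C b : plane2 C b = \sum_a line3 C a b.
Proof. exact: exchange_big. Qed.

Lemma plane3E C c : plane3 C c = \sum_b line1 C b c.
Proof. exact: exchange_big. Qed.

Lemma sum_vert (F : vert q -> nat) :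
  \sum_u F u = \sum_a \sum_b \sum_c F (a, b, c).
Proof.
rewrite pair_big /= pair_big /=.
by apply: eq_bigr => -[[a b] c].
Qed.

Lemma card_plane1 C : #|C| = \sum_a plane1 C a.
Proof. by rewrite -sum1_card big_mkcond /= sum_vert. Qed.

Lemma card_plane2 C : #|C| = \sum_b plane2 C b.
Proof.
by rewrite card_plane1 exchange_big; apply: eq_bigr => b _; rewrite plane2E.
Qed.

Lemma card_plane3 C : #|C| = \sum_c plane3 C c.
Proof. by rewrite card_plane1 (eq_bigr _ (fun a _ => plane1E C a)) exchange_big. Qed.

Lemma solid_LD_of_lines C : 0 < q ->
    (forall b c, 0 < line1 C b c) -> (forall a c, 0 < line2 C a c) ->
    (forall a b, 0 < line3 C a b) ->
  solid_LD C.
Proof.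
move=> q0 meet1 meet2 meet3; split.
  have [c abc] := sum_gt0_exists (meet3 (Ordinal q0) (Ordinal q0)).
  by apply/set0Pn; exists (Ordinal q0, Ordinal q0, c).
move=> [[a b] c] v uC vC uv.
have [x1 x1C] := sum_gt0_exists (meet1 b c).
have [x2 x2C] := sum_gt0_exists (meet2 a c).
have [x3 x3C] := sum_gt0_exists (meet3 a b).
have x1a : x1 != a by apply: contraNneq uC => <-.
have x2b : x2 != b by apply: contraNneq uC => <-.
have sep z : z \in C -> z \in Nclosed (a, b, c) -> z \notin Nclosed v ->
    Iset C (a, b, c) :\: Iset C v != set0.
  by move=> zC zu zv; apply/set0Pn; exists z; rewrite /Iset in_setD !in_setI zC zu (negbTE zv).
have [n1|] := boolP ((x1, b, c) \in Nclosed v);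
  last by apply: sep; rewrite // in_Nclosed !eqxx.
have [n2|] := boolP ((a, x2, c) \in Nclosed v);
  last by apply: sep; rewrite // in_Nclosed !eqxx ?orbT.
have [n3|] := boolP ((a, b, x3) \in Nclosed v);
  last by apply: sep; rewrite // in_Nclosed !eqxx ?orbT.
by case: (Nclosed_three_lines _ x1a x2b n1 n2 n3); rewrite eq_sym.
Qed.

Definition code0 : {set vert q} := [set u : vert q | (u.1.1 + u.1.2 + u.2) %% q == 0].

Lemma mem_code0 a b c : ((a, b, c) \in code0) = ((a + b + c) %% q == 0).
Proof. by rewrite inE. Qed.

Lemma exists_mod_compl t : 0 < q -> exists x : 'I_q, (t + x) %% q == 0.
Proof.
move=> q0; exists (Ordinal (ltn_pmod (q - t %% q) q0)).
by rewrite /= modnDmr -modnDml subnKC ?modnn // ltnW // ltn_pmod.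
Qed.

Lemma mod_compl_unique t x y : (t + x) %% q == 0 -> (t + y) %% q == 0 -> x = y.
Proof.
move=> tx ty; apply: val_inj => /=; rewrite -(modn_small (ltn_ord x)) -(modn_small (ltn_ord y)).
by apply/eqP; rewrite -(eqn_modDl t) (eqP tx) (eqP ty).
Qed.

Lemma line3_code0 a b : 0 < q -> line3 code0 a b = 1.
Proof.
move=> q0; have [c abc] := exists_mod_compl (a + b) q0.
apply/eqP/sum_nat_eq1; exists c; split => // [|c' c'c _]; rewrite mem_code0 ?abc //.
by case: eqP => // /eqP abc'; case/eqP: c'c; apply: mod_compl_unique abc' abc.
Qed.

Lemma card_code0 : 0 < q -> #|code0| = q ^ 2.
Proof.
move=> q0; rewrite card_plane1 (eq_bigr (fun=> q)) => [|a _].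
  by rewrite sum_nat_const card_ord.
rewrite /plane1 (eq_bigr (fun=> 1)) => [|b _]; last exact: line3_code0.
by rewrite sum_nat_const card_ord muln1.
Qed.

Lemma solid_LD_code0 : 0 < q -> solid_LD code0.
Proof.
move=> q0; apply: solid_LD_of_lines (q0) _ _ _ => [b c|a c|a b]; last by rewrite line3_code0.
  have [x bcx] := exists_mod_compl (b + c) q0.
  by apply: leq_trans (leq_sum_term _ x); rewrite mem_code0 -addnA addnC bcx.
have [x acx] := exists_mod_compl (a + c) q0.
by apply: leq_trans (leq_sum_term _ x); rewrite mem_code0 addnAC acx.
Qed.

Definition rot u : vert q := (u.2, u.1.1, u.1.2).
Definition unrot u : vert q := (u.1.2, u.2, u.1.1).
Definition rotC C := rot @^-1: C.

Lemma rotK : cancel rot unrot. Proof. by case=> [[]]. Qed.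
Lemma unrotK : cancel unrot rot. Proof. by case=> [[]]. Qed.

Lemma Nclosed_rot u v : (rot u \in Nclosed (rot v)) = (u \in Nclosed v).
Proof.
case: u v => [[x y] w] [[a b] c]; rewrite !in_Nclosed.
by case: (x == a); case: (y == b); case: (w == c).
Qed.

Lemma mem_rotC C u : (u \in rotC C) = (rot u \in C).
Proof. by rewrite inE. Qed.

Lemma solid_LD_rotC C : solid_LD C -> solid_LD (rotC C).
Proof.
case=> /set0Pn [w wC] sep; split.
  by apply/set0Pn; exists (unrot w); rewrite mem_rotC unrotK.
move=> u v; rewrite !mem_rotC => uC vC uv.
have /set0Pn [z] : Iset C (rot u) :\: Iset C (rot v) != set0.
  by rewrite sep // (inj_eq (can_inj rotK)).
rewrite /Iset !in_setD !in_setI -[z]unrotK !Nclosed_rot => zI.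
by apply/set0Pn; exists (unrot z); rewrite /Iset in_setD !in_setI !mem_rotC.
Qed.

Lemma card_rotC C : #|rotC C| = #|C|.
Proof. exact/card_preimset/(can_inj rotK). Qed.

Lemma line1_rotC C b c : line1 (rotC C) b c = line2 C c b.
Proof. by apply: eq_bigr => a _; rewrite mem_rotC. Qed.

Lemma line2_rotC C a c : line2 (rotC C) a c = line3 C c a.
Proof. by apply: eq_bigr => b _; rewrite mem_rotC. Qed.

Lemma line3_rotC C a b : line3 (rotC C) a b = line1 C a b.
Proof. by apply: eq_bigr => c _; rewrite mem_rotC. Qed.

Lemma plane1_rotC C a : plane1 (rotC C) a = plane2 C a.
Proof. by apply: eq_bigr => b _; rewrite line3_rotC. Qed.

Lemma plane2_rotC C b : plane2 (rotC C) b = plane3 C b.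
Proof. by apply: eq_bigr => c _; rewrite line1_rotC. Qed.

Lemma plane3_rotC C c : plane3 (rotC C) c = plane1 C c.
Proof. by apply: eq_bigr => a _; rewrite line2_rotC. Qed.

Section ForcedLines.

Variable C : {set vert q}.
Hypothesis solC : solid_LD C.

Lemma line12_eq0_Nclosed a b c x y w : line1 C b c = 0 -> line2 C a c = 0 ->
  (x, y, w) \in C -> (x, y, w) \in Nclosed (a, b, c) -> x = a /\ y = b.
Proof.
move=> l1 l2 xyw; rewrite in_Nclosed => /or3P [] /andP [/eqP e1 /eqP e2] //.
  by rewrite e1 e2 (negbTE (line1_eq0_notin x l1)) in xyw.
by rewrite e1 e2 (negbTE (line2_eq0_notin y l2)) in xyw.
Qed.

Lemma line3_full a b c c' : line1 C b c = 0 -> line2 C a c = 0 -> c' != c ->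
  (a, b, c') \in C.
Proof.
move=> l1 l2 c'c; apply: (solid_LD_cover solC (line1_eq0_notin a l1)).
  by rewrite xpair_eqE eqxx.
move=> [[x y] w] xyw /(line12_eq0_Nclosed l1 l2 xyw) [-> ->].
by rewrite in_Nclosed !eqxx !orbT.
Qed.

Lemma line3_ge a b c : line1 C b c = 0 -> line2 C a c = 0 -> q.-1 <= line3 C a b.
Proof.
move=> l1 l2; rewrite /line3 (bigD1 c) //=; apply: leq_trans (leq_addl _ _).
have <- : \sum_(c' | c' != c) 1 = q.-1 by rewrite sum1_card cardC1 card_ord.
by apply: leq_sum => c' c'c; rewrite (line3_full l1 l2 c'c).
Qed.

End ForcedLines.

Lemma line1_ge C a b c : solid_LD C -> line2 C a c = 0 -> line3 C a b = 0 ->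
  q.-1 <= line1 C b c.
Proof.
move=> solC l2 l3; rewrite -line3_rotC.
by apply: (line3_ge (solid_LD_rotC solC) (c := a)); rewrite ?line1_rotC ?line2_rotC.
Qed.

Lemma line2_ge C a b c : solid_LD C -> line3 C a b = 0 -> line1 C b c = 0 ->
  q.-1 <= line2 C a c.
Proof.
move=> solC l3 l1; rewrite -line1_rotC.
by apply: (line1_ge (solid_LD_rotC solC) (a := b)); rewrite ?line2_rotC ?line3_rotC.
Qed.

Lemma lines_ge2 C a b c : 2 < q -> solid_LD C -> (a, b, c) \notin C ->
  2 <= line1 C b c + line2 C a c + line3 C a b.
Proof.
move=> q3 solC abc.
case: (posnP (line1 C b c)) => l1; case: (posnP (line2 C a c)) => l2;
  case: (posnP (line3 C a b)) => l3; try lia.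
- by have := line3_ge solC l1 l2; lia.
- by have := line3_ge solC l1 l2; lia.
- by have := line2_ge solC l3 l1; lia.
- by have := line1_ge solC l2 l3; lia.
Qed.

Lemma planes12_ge C a b : 2 < q -> solid_LD C -> line3 C a b = 0 ->
  2 * q <= plane1 C a + plane2 C b.
Proof.
move=> q3 solC l3; rewrite plane1E /plane2 -big_split /=.
have <- : \sum_(c : 'I_q) 2 = 2 * q by rewrite sum_nat_const card_ord mulnC.
apply: leq_sum => c _.
by have := lines_ge2 q3 solC (line3_eq0_notin c l3); rewrite l3; lia.
Qed.

Lemma plane1_ge C a c : 2 < q -> solid_LD C -> line2 C a c = 0 ->
  2 * q + (q - 3) * \sum_b (line1 C b c == 0) <= plane1 C a + plane3 C c.
Proof.
move=> q3 solC l2; rewrite plane3E /plane1 -big_split /=.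
have <- : \sum_b (2 + (q - 3) * (line1 C b c == 0)) =
          2 * q + (q - 3) * \sum_b (line1 C b c == 0).
  by rewrite big_split big_distrr sum_nat_const card_ord mulnC.
apply: leq_sum => b _; case: (posnP (line1 C b c)) => l1.
  by rewrite l1 muln1; have := line3_ge solC l1 l2; lia.
rewrite muln0.
by have := lines_ge2 q3 solC (line2_eq0_notin b l2); rewrite l2; lia.
Qed.

Lemma plane2_ge C b c : 2 < q -> solid_LD C -> line1 C b c = 0 ->
  2 * q + (q - 3) * \sum_a (line2 C a c == 0) <= plane2 C b + plane3 C c.
Proof.
move=> q3 solC l1; rewrite plane2E /plane3 -big_split /=.
have <- : \sum_a (2 + (q - 3) * (line2 C a c == 0)) =
          2 * q + (q - 3) * \sum_a (line2 C a c == 0).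
  by rewrite big_split big_distrr sum_nat_const card_ord mulnC.
apply: leq_sum => a _; case: (posnP (line2 C a c)) => l2.
  by rewrite l2 muln1; have := line3_ge solC l1 l2; lia.
rewrite muln0.
by have := lines_ge2 q3 solC (line1_eq0_notin a l1); rewrite l1; lia.
Qed.

Section MinLayer.

Variables (C : {set vert q}) (c0 : 'I_q).
Hypotheses (q3 : 2 < q) (solC : solid_LD C).
Hypothesis min1 : forall a, plane3 C c0 <= plane1 C a.
Hypothesis min2 : forall b, plane3 C c0 <= plane2 C b.

Lemma min_layer_eq : #|C| < q ^ 2 -> plane3 C c0 = q.-1.
Proof.
move=> small; pose R := \sum_b (line1 C b c0 == 0 : nat).
apply: (@min_layer_arith q _ (\sum_a (line2 C a c0 == 0 : nat)) R #|C|) => //.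
- rewrite card_plane1 -[q in q * _]card_ord -sum_nat_const.
  exact: leq_sum.
- by rewrite -[q in q <= _]card_ord card_le_sum_add_eq0.
- by rewrite plane3E -[q in q <= _]card_ord card_le_sum_add_eq0.
rewrite card_plane1 -[q in q * _]card_ord.
apply: leq_sum_split min1 _ => a /eqP l2.
exact: plane1_ge.
Qed.

Lemma card_min_layer : q ^ 2 <= #|C|.
Proof.
rewrite leqNgt; apply/negP => small; have m_eq := min_layer_eq small.
have [a0 l2] : exists a0, line2 C a0 c0 = 0.
  by apply: sum_lt_card_eq0; rewrite card_ord -/(plane3 C c0) m_eq; lia.
have [b0 l1] : exists b0, line1 C b0 c0 = 0.
  by apply: sum_lt_card_eq0; rewrite card_ord -plane3E m_eq; lia.
have plane1_a0 : 2 * plane3 C c0 <= plane1 C a0.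
  have := plane1_ge q3 solC l2.
  have := leq_mul (leqnn (q - 3)) (leq_sum_term (fun b => (line1 C b c0 == 0 : nat)) b0).
  by rewrite /= l1 m_eq; lia.
have plane2_b0 : 2 * plane3 C c0 <= plane2 C b0.
  have := plane2_ge q3 solC l1.
  have := leq_mul (leqnn (q - 3)) (leq_sum_term (fun a => (line2 C a c0 == 0 : nat)) a0).
  by rewrite /= l2 m_eq; lia.
have sum_le : #|C| <= (q + 1) * plane3 C c0 by move: small; rewrite m_eq; nia.
have plane1_small a : a != a0 -> plane1 C a <= plane3 C c0.
  by apply: leq_others_of_sum min1 plane1_a0 _; rewrite card_ord -card_plane1.
have plane2_small b : b != b0 -> plane2 C b <= plane3 C c0.
  by apply: leq_others_of_sum min2 plane2_b0 _; rewrite card_ord -card_plane2.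
have line3_b0 a : a != a0 -> line3 C a b0 = 0.
  move=> aa0; have light := plane1_small a aa0; rewrite m_eq in light.
  have [b l3] : exists b, line3 C a b = 0.
    by apply: sum_lt_card_eq0; rewrite card_ord -/(plane1 C a); lia.
  have := planes12_ge q3 solC l3; case: (eqVneq b b0) => [<- //|bb0].
  by have := plane2_small b bb0; lia.
have : plane2 C b0 <= q.
  by rewrite plane2E (bigD1 a0) //= big1 ?addn0 ?line3_le // => a /line3_b0.
lia.
Qed.

End MinLayer.

Lemma card_ge_sq C : 2 < q -> solid_LD C -> q ^ 2 <= #|C|.
Proof.
move=> q3 solC; have q0 : 0 < q by lia.
have [a1 min1] := exists_argmin (Ordinal q0) (plane1 C).
have [b1 min2] := exists_argmin (Ordinal q0) (plane2 C).
have [c1 min3] := exists_argmin (Ordinal q0) (plane3 C).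
have [[h1 h2]|[[h1 h2]|[h1 h2]]] :
    plane3 C c1 <= plane1 C a1 /\ plane3 C c1 <= plane2 C b1 \/
    plane1 C a1 <= plane2 C b1 /\ plane1 C a1 <= plane3 C c1 \/
    plane2 C b1 <= plane3 C c1 /\ plane2 C b1 <= plane1 C a1 by lia.
- by apply: (card_min_layer (c0 := c1) q3 solC) => x; [have := min1 x | have := min2 x]; lia.
- rewrite -card_rotC; apply: (card_min_layer (c0 := a1) q3 (solid_LD_rotC solC)) => x;
    rewrite !(plane1_rotC, plane2_rotC, plane3_rotC); [have := min2 x | have := min3 x]; lia.
- rewrite -2!card_rotC.
  apply: (card_min_layer (c0 := b1) q3 (solid_LD_rotC (solid_LD_rotC solC))) => x;
    rewrite !(plane1_rotC, plane2_rotC, plane3_rotC); [have := min3 x | have := min1 x]; lia.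
Qed.

Section Order2.

Hypothesis q2 : q = 2.

Lemma ord2_eq x y c : x != c -> y != c -> x = y.
Proof.
move=> xc yc; apply/val_inj/eqP; move: xc yc.
rewrite -(inj_eq val_inj) -[y == c](inj_eq val_inj) /=.
by have := ltn_ord x; have := ltn_ord y; have := ltn_ord c; lia.
Qed.

Lemma sum_ord2 (F : 'I_q -> nat) x y : x != y -> \sum_i F i = F x + F y.
Proof.
move=> xy; rewrite (bigD1 x) // (bigD1 y) 1?eq_sym //= big1 ?addn0 // => i /andP [ix iy].
by case/eqP: iy; apply: ord2_eq ix _; rewrite eq_sym.
Qed.

Lemma cross_full C a b c c' x y : solid_LD C ->
    line1 C b c = 0 -> line2 C a c = 0 -> c' != c -> (x == a) || (y == b) ->
  (x, y, c') \in C.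
Proof.
move=> solC l1 l2 c'c xy; apply: (solid_LD_cover solC (line1_eq0_notin a l1)).
  by rewrite xpair_eqE (negbTE c'c) andbF.
move=> [[x' y'] w] zC /(line12_eq0_Nclosed l1 l2 zC) [ex ey]; subst x' y'.
have wc : w != c by apply: contraNneq (line1_eq0_notin a l1) => <-.
rewrite (ord2_eq wc c'c) in_Nclosed eqxx !andbT [a == x]eq_sym [b == y]eq_sym.
by case/orP: xy => ->; rewrite ?orbT.
Qed.

Lemma card_ge4 C : solid_LD C -> 4 <= #|C|.
Proof.
move=> solC; have q0 : 0 < q by rewrite q2.
have [c0 min3] := exists_argmin (Ordinal q0) (plane3 C).
have [c1 c1c0] : exists c1, c1 != c0 by apply: ord_exists_neq; rewrite q2.
rewrite card_plane3 (sum_ord2 _ c1c0).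
case: (leqP 2 (plane3 C c0)) => [|small]; first by have := min3 c1; lia.
have [b l1] : exists b, line1 C b c0 = 0.
  by apply: sum_lt_card_eq0; rewrite -plane3E card_ord; lia.
have [a l2] : exists a, line2 C a c0 = 0.
  by apply: sum_lt_card_eq0; rewrite card_ord -/(plane3 C c0); lia.
have [a' a'a] : exists a', a' != a by apply: ord_exists_neq; rewrite q2.
have [b' b'b] : exists b', b' != b by apply: ord_exists_neq; rewrite q2.
have cover x y := cross_full (x := x) (y := y) solC l1 l2 c1c0.
have corner : plane3 C c0 = 0 -> (a', b', c1) \in C.
  move=> empty; apply: (cross_full (a := a') (b := b') solC _ _ c1c0); rewrite ?eqxx //.
    by have := leq_sum_term (fun b => line1 C b c0) b'; rewrite -plane3E empty; lia.
  by have := leq_sum_term (fun a => line2 C a c0) a'; rewrite -/(plane3 C c0) empty; lia.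
have line2E x : line2 C x c1 = ((x, b', c1) \in C) + ((x, b, c1) \in C).
  exact: sum_ord2.
have -> : plane3 C c1 = ((a', b', c1) \in C) + 3.
  rewrite [LHS](sum_ord2 _ a'a) !line2E (cover a b) ?eqxx // (cover a b') ?eqxx //.
  by rewrite (cover a' b) ?eqxx ?orbT //= -addnA.
by case: (posnP (plane3 C c0)) => [/corner -> | ] /=; lia.
Qed.

End Order2.

End Cube.

Theorem theorem23 (q : nat) (hq : 2 <= q) : gamma_DLD_is q (q ^ 2).
Proof.
have q0 : 0 < q by apply: ltnW.
split; first by exists (code0 q); split; [exact: solid_LD_code0 | exact: card_code0].
move=> C solC; case: (ltngtP q 2) => [|q3|q2]; first lia.
  exact: card_ge_sq.
have -> : q ^ 2 = 4 by rewrite q2.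
exact: card_ge4.
Qed.
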